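(* Fix $0<\delta<1$, let $\epsilon=\frac12+\frac\delta2$, $\epsilon'=\frac12$, $c=\frac8\delta$, and let $k_n=\lceil 2^{\sqrt n}\rceil$. For all sufficiently large even $n$ there exists a subset $\mathcal M_n\subseteq\mathcal G_n$ with $|\mathcal M_n|\le k_n$ such that there is no graph $U$ with at most $2^{n^{\frac12-\delta}}$ vertices containing every graph of $\mathcal M_n$ as an induced subgraph.
   Context: For even $n$, a good graph on $n$ vertices is a bipartite graph with vertex set $[n]$ and parts $\{1,\dots,\frac n2\}$ and $\{\frac n2+1,\dots,n\}$, having exactly $\lfloor(\frac n2)^{2-\epsilon}\rfloor$ edges, such that every induced subgraph with at most $(\frac n2)^{\epsilon'}$ vertices has a vertex of degree less than $c$ (within that subgraph). $\mathcal G_n$ denotes the set of good graphs on $n$ vertices. A graph $F$ is contained in $U$ as an induced subgraph if there is an injection $\pi:V(F)\to V(U)$ with $xy\in E(F)\iff\pi(x)\pi(y)\in E(U)$. *)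

(* NB: with MathComp loaded, the key %R denotes ring_scope, so real-number
   expressions are written with R_scope opened locally. *)
From Stdlib Require Import Reals.
From mathcomp Require Import all_boot.

Set Implicit Arguments.
Unset Strict Implicit.
Unset Printing Implicit Defensive.

Definition sgraph (n : nat) := {set {set 'I_n}}.

Definition is_simple (n : nat) (E : sgraph n) : bool :=
  [forall e in E, #|e| == 2].

Local Open Scope R_scope.

Definition is_floor (m : nat) (x : R) : Prop := INR m <= x /\ x < INR m + 1.
Definition is_ceil (k : nat) (x : R) : Prop := INR k - 1 < x /\ x <= INR k.

Definition deg_in (n : nat) (E : sgraph n) (S : {set 'I_n}) (v : 'I_n) : nat :=
  #|[set u in S | [set u; v] \in E]|.

(* Vertices [n] = {1..n} are represented by 'I_n = {0..n-1} (vertex i+1 <-> i);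
   the part {1..n/2} corresponds to indices i < n/2. *)
Definition good_graph (n : nat) (eps eps' c : R) (E : sgraph n) : Prop :=
  is_simple E /\
  (forall e, e \in E -> exists x y : 'I_n, e = [set x; y] /\ (x < n./2 <= y)%N) /\
  is_floor #|E| (Rpower (INR n / 2) (2 - eps)) /\
  (forall S : {set 'I_n}, (0 < #|S|)%N -> INR #|S| <= Rpower (INR n / 2) eps' ->
     exists2 v, v \in S & INR (deg_in E S v) < c).

Definition induced_sub (n N : nat) (F : sgraph n) (U : sgraph N) : Prop :=
  exists pi : 'I_n -> 'I_N, injective pi /\
    forall x y : 'I_n, ([set x; y] \in F) = ([set pi x; pi y] \in U).

From Stdlib Require Import Reals ZArith Lra Lia.
From mathcomp Require Import all_boot zify.

Set Implicit Arguments.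
Unset Strict Implicit.
Unset Printing Implicit Defensive.

(** Let m = n/2, e = floor (m^(3/2 - delta/2)), d0 = ceil (8/delta) and consider the
  C(m^2, e) >= 2^e bipartite graphs with e edges between the two halves. Such a graph
  fails to be good only if some set S with |S|^2 <= m spans at least |S| d0 / 2 edges,
  and for a fixed S this happens for at most a (m^2)^-|S| fraction of the graphs;
  summing over S, at most half of them are bad. Hence there are at least 2 B^n good
  graphs, B = floor (2^(n^(1/2 - delta))). A graph on N <= B vertices contains at most
  N^n graphs on [n] as induced subgraphs, so at most (B+1) 2^(B^2) B^(n k) k-tuples
  of graphs embed simultaneously into a single such graph, while there are at least
  (2 B^n)^k k-tuples of good graphs. For k = 2^(floor (sqrt n)) > 2^(B^2 + B) some
  k-tuple of good graphs therefore has no common universal graph. *)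

Lemma leq_expn2r a b k : a <= b -> a ^ k <= b ^ k.
Proof. by move=> le_ab; elim: k => // k IHk; rewrite !expnS leq_mul. Qed.

Lemma expn2_leq_bin k p : 2 * k <= p -> 2 ^ k <= 'C(p, k).
Proof.
elim: k p => [|k IHk] [|p] le_kp; rewrite ?bin0 //.
have -> : 'C(p.+1, k.+1) = (p.+1 * 'C(p, k)) %/ k.+1 by rewrite (mul_bin_diag p.+1 k) mulKn.
rewrite leq_divRL // expnS mulnC mulnA.
by apply: leq_mul; [lia | apply: IHk; lia].
Qed.

Lemma bin_sub_mul_leq j e P : j <= e <= P ->
  'C(P - j, e - j) * P ^ j <= 'C(P, e) * e ^ j.
Proof.
elim: j => [|j IHj] /andP[le_je le_eP]; first by rewrite !subn0.
have Pj_gt0 : 0 < P - j by lia.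
rewrite -(leq_pmul2l Pj_gt0).
have diag : (P - j) * 'C(P - j.+1, e - j.+1) = (e - j) * 'C(P - j, e - j).
  by have := mul_bin_diag (P - j) (e - j.+1); rewrite !subnS prednK ?subn_gt0.
have cross : (e - j) * P <= e * (P - j) by nia.
rewrite mulnA diag.
have := leq_mul (IHj ltac:(lia)) cross.
rewrite !expnS; move: (e - j) (P - j) ('C(_, _)) ('C(P, e)) (P ^ j) (e ^ j).
by move=> x y c C p q; lia.
Qed.

Lemma bin_fact_leq_expn a t : 'C(a, t) * t`! <= a ^ t.
Proof.
rewrite bin_ffact; elim: t a => // t IHt a.
by rewrite ffactnS expnS leq_mul // (leq_trans (IHt _)) // leq_expn2r ?leq_pred.
Qed.

Lemma card_bigcup_leq (T I : finType) (A : {pred I}) (F : I -> {set T}) :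
  #|\bigcup_(i in A) F i| <= \sum_(i in A) #|F i|.
Proof.
elim/big_ind2: _ => [|k1 X1 k2 X2 le1 le2|//]; first by rewrite cards0.
by apply: leq_trans (leq_card_setU X1 X2) _; apply: leq_add.
Qed.

Lemma sum_expn_subsets n c :
  \sum_(S : {set 'I_n}) c ^ (n - #|S|) = (1 + c) ^ n.
Proof.
rewrite -[in RHS](card_ord n) -prod_nat_const (bigA_distr _ _ (fun=> 1) (fun=> c)).
apply: eq_big => // S _; rewrite (bigID (mem S)) /= big1 => [|i ->] //.
rewrite mul1n (eq_bigr (fun=> c)) => [|i /negbTE -> //].
rewrite prod_nat_const; congr (c ^ _).
have -> : n - #|S| = #|~: S| by rewrite (cardsCs (~: S)) setCK card_ord.
by apply: eq_card => i; rewrite inE.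
Qed.

Local Open Scope R_scope.

Lemma INR_muln a b : INR (a * b) = INR a * INR b.
Proof. by rewrite -multE mult_INR. Qed.

Lemma INR_addn a b : INR (a + b) = INR a + INR b.
Proof. by rewrite -plusE plus_INR. Qed.

Lemma INR_expn a k : INR (a ^ k) = INR a ^ k.
Proof. by elim: k => // k IHk; rewrite expnS INR_muln IHk. Qed.

Lemma leq_INR a b : INR a <= INR b -> (a <= b)%N.
Proof. by move/INR_le/leP. Qed.

Lemma pow_succ_leq (t : nat) : (INR t + 1) ^ t <= 3 * INR t ^ t.
Proof.
case: t => [|t]; first by rewrite /=; lra.
set x := INR t.+1; have x_gt0 : 0 < x by apply: lt_0_INR; lia.
have inv_gt0 := Rinv_0_lt_compat x x_gt0.
have -> : x + 1 = x * (1 + / x) by field; lra.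
rewrite Rpow_mult_distr Rmult_comm; apply: Rmult_le_compat_r; first by apply: pow_le; lra.
(* (1 + 1/x)^x <= exp 1 <= 3 *)
have le_exp : 1 + / x <= exp (/ x) by have := exp_ineq1 (/ x); lra.
apply: Rle_trans (pow_incr _ _ t.+1 (conj _ le_exp)) _; first lra.
rewrite -Rpower_pow; last exact: exp_pos.
rewrite /Rpower ln_exp -/x Rinv_r; [exact: exp_le_3 | lra].
Qed.

Lemma expn_leq_fact t : (t ^ t <= 3 ^ t * t`!)%N.
Proof.
elim: t => // t IHt.
have step : (t.+1 ^ t <= 3 * t ^ t)%N.
  apply: leq_INR; rewrite INR_muln !INR_expn S_INR.
  have -> : INR 3 = 3 by rewrite /=; lra.
  exact: pow_succ_leq.
rewrite factS !expnS.
by move: step IHt; move: (t.+1 ^ t)%N (t ^ t)%N (3 ^ t)%N (t`!) => a b c f; nia.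
Qed.

Lemma bin_mul_expn_leq a t : ('C(a, t) * t ^ t <= (3 * a) ^ t)%N.
Proof.
rewrite expnMn; apply: leq_trans (leq_mul (leqnn _) (expn_leq_fact t)) _.
by rewrite mulnCA leq_mul // bin_fact_leq_expn.
Qed.

Lemma pow_1plus_mul_leq1 (a : R) (k : nat) : 0 <= a -> (1 + a) ^ k * (1 - INR k * a) <= 1.
Proof.
move=> a_ge0; elim: k => [|k IHk]; first by rewrite /=; lra.
have pow_ge0 : 0 <= (1 + a) ^ k by apply: pow_le; lra.
have : 0 <= (1 + a) ^ k * ((INR k + 1) * a * a).
  by apply: Rmult_le_pos => //; have := pos_INR k; nra.
rewrite S_INR /=; nra.
Qed.

Lemma expn_add1_leq k c : (8 * k <= c)%N -> (7 * (1 + c) ^ k <= 8 * c ^ k)%N.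
Proof.
case: (posnP c) => [-> | c_gt0] le_kc; first by have -> : k = 0%N by lia.
have [R7 R8] : INR 7 = 7 /\ INR 8 = 8 by split; rewrite /=; lra.
have cR_gt0 : 0 < INR c by apply: lt_0_INR; lia.
have inv_gt0 := Rinv_0_lt_compat _ cR_gt0.
have small : INR k * / INR c <= 1 / 8.
  have /le_INR := elimT leP le_kc; rewrite INR_muln R8 => le_kc'.
  by apply: (Rmult_le_reg_r (INR c)) => //; rewrite Rmult_assoc Rinv_l; lra.
apply: leq_INR; rewrite !INR_muln !INR_expn INR_addn R8 R7.
have -> : 1 + INR c = INR c * (1 + / INR c) by field; lra.
have := pow_1plus_mul_leq1 k (Rlt_le _ _ inv_gt0).
have pow_gt0 : 0 < INR c ^ k by apply: pow_lt.
have pow_ge0 : 0 <= (1 + / INR c) ^ k by apply: pow_le; lra.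
rewrite Rpow_mult_distr; nra.
Qed.

Lemma is_floor_exists x : 0 <= x -> exists k, is_floor k x.
Proof.
move=> x_ge0; have [up_gt up_le] := archimed x.
have up_pos : (0 <= up x - 1)%Z.
  have : (0 < up x)%Z by apply: lt_IZR; lra.
  lia.
exists (Z.to_nat (up x - 1)); rewrite /is_floor INR_IZR_INZ Z2Nat.id // minus_IZR; lra.
Qed.

Lemma is_ceil_exists x : 0 <= x -> exists k, is_ceil k x.
Proof.
move=> x_ge0; have [up_gt up_le] := archimed (- x).
have up_pos : (0 <= 1 - up (- x))%Z.
  have : (up (- x) <= 1)%Z by apply: le_IZR; lra.
  lia.
exists (Z.to_nat (1 - up (- x))); rewrite /is_ceil INR_IZR_INZ Z2Nat.id // minus_IZR; lra.
Qed.

Lemma leq_is_floor k d x : is_floor k x -> INR d <= x -> (d <= k)%N.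
Proof.
move=> [_ x_lt] d_le; suff : INR d < INR k.+1 by move/INR_lt/ltP.
by rewrite S_INR; lra.
Qed.

Lemma Rpower_two x : 0 < x -> Rpower x 2 = x * x.
Proof. by move=> x_gt0; rewrite (_ : 2 = INR 2) ?Rpower_pow //=; lra. Qed.

Lemma le_Rpower_half_of_sqr x s : 0 <= s -> s * s <= x -> s <= Rpower x (/ 2).
Proof.
move=> s_ge0 ss_le; have x_gt0 : 0 < x \/ s = 0 by nra.
case: x_gt0 => [x_gt0 | ->]; last by have := exp_pos ((/ 2) * ln x); rewrite /Rpower; lra.
by rewrite Rpower_sqrt // -(sqrt_square s) //; apply: sqrt_le_1_alt.
Qed.

Lemma edge_ratio_leq (d x s t P e : R) :
  0 < d -> d < 1 -> 0 < s -> s * s <= x -> 4 * s <= d * t -> x * x <= P ->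
  0 <= e -> e <= Rpower x (3/2 - d/2) ->
  3 * (s * s) * e <= Rpower x (- (d / 2)) * (t * P).
Proof.
move=> d_gt0 d_lt1 s_gt0 ss_le st_le xx_le e_ge0 e_le.
have x_gt0 : 0 < x by nra.
have t_gt0 : 0 < t by nra.
have s_le := le_Rpower_half_of_sqr (Rlt_le _ _ s_gt0) ss_le.
have exps : Rpower x (/ 2) * Rpower x (3/2 - d/2) = Rpower x (- (d / 2)) * (x * x).
  by rewrite -Rpower_two // -!Rpower_plus; congr Rpower; lra.
have q_gt0 : 0 < Rpower x (- (d / 2)) by apply: exp_pos.
have : s * e <= Rpower x (/ 2) * Rpower x (3/2 - d/2) by apply: Rmult_le_compat; lra.
rewrite exps => se_le.
have three_s : 3 * s <= t by nra.
have se_ge0 : 0 <= s * e by nra.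
have step1 : 3 * (s * s) * e <= t * (s * e).
  by have := Rmult_le_compat_r _ _ _ se_ge0 three_s; lra.
have step2 : t * (s * e) <= t * (Rpower x (- (d / 2)) * (x * x)).
  exact: Rmult_le_compat_l _ _ _ (Rlt_le _ _ t_gt0) se_le.
have step3 : t * (Rpower x (- (d / 2)) * (x * x)) <= Rpower x (- (d / 2)) * (t * P).
  have qt_ge0 : 0 <= Rpower x (- (d / 2)) * t by nra.
  by have := Rmult_le_compat_l _ _ _ qt_ge0 xx_le; lra.
lra.
Qed.

Lemma Rpower_decay_pow_leq1 (d x : R) (s t : nat) :
  0 < d -> 1 <= x -> 4 * INR s <= d * INR t ->
  Rpower x (- (d / 2)) ^ t * (x * x) ^ s <= 1.
Proof.
move=> d_gt0 x_ge1 st_le.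
have x_gt0 : 0 < x by lra.
rewrite -(Rpower_pow t); last exact: exp_pos.
rewrite Rpower_mult Rpow_mult_distr -pow_add -(Rpower_pow (s + s)) // -Rpower_plus.
by rewrite -(Rpower_O x x_gt0); apply: Rle_Rpower => //; rewrite INR_addn; lra.
Qed.

Lemma uphalf_mul_geq (d : R) s d0 :
  0 < d -> 8 / d <= INR d0 -> 4 * INR s <= d * INR (uphalf (s * d0)).
Proof.
move=> d_gt0 d0_ge.
have d_d0 : 8 <= d * INR d0.
  have -> : 8 = d * (8 / d) by field; lra.
  exact: Rmult_le_compat_l _ _ _ (Rlt_le _ _ d_gt0) d0_ge.
have le_half : (s * d0 <= 2 * uphalf (s * d0))%N by lia.
have /le_INR := elimT leP le_half; rewrite !INR_muln (_ : INR 2 = 2) // => le_halfR.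
have := Rmult_le_compat_l _ _ _ (Rlt_le _ _ d_gt0) le_halfR.
by have := Rmult_le_compat_l _ _ _ (pos_INR s) d_d0; lra.
Qed.

(* Union bound for one set of s vertices: over all C(s^2, t) choices of t edges inside
   it, the e-edge graphs containing them form at most a (m^2)^-s fraction of all
   C(P, e) graphs. *)
Lemma bin_dense_leq (d : R) (m s t P e : nat) :
  0 < d -> d < 1 -> (0 < s)%N -> (s * s <= m)%N -> 4 * INR s <= d * INR t ->
  (m * m <= P)%N -> INR e <= Rpower (INR m) (3/2 - d/2) -> (t <= e <= P)%N ->
  ('C(s * s, t) * 'C(P - t, e - t) * (m * m) ^ s <= 'C(P, e))%N.
Proof.
move=> d_gt0 d_lt1 s_gt0 ss_le st_le mm_le e_le te_eP.
have nat_step : ('C(s * s, t) * 'C(P - t, e - t) * (t * P) ^ t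
                 <= 'C(P, e) * (3 * (s * s) * e) ^ t)%N.
  have := leq_mul (bin_mul_expn_leq (s * s) t) (bin_sub_mul_leq te_eP).
  by rewrite !expnMn; move: ('C(_, _)) ('C(_, _)) ('C(_, _)) => a b c; lia.
have s_ge1 : 1 <= INR s by apply: (le_INR 1); apply/leP.
have ss_le' : INR s * INR s <= INR m by rewrite -INR_muln; apply/le_INR/leP.
have mm_le' : INR m * INR m <= INR P by rewrite -INR_muln; apply/le_INR/leP.
have t_gt0 : 0 < INR t by nra.
have m_ge1 : 1 <= INR m by nra.
have P_gt0 : 0 < INR P by nra.
have sR_gt0 : 0 < INR s by lra.
have ratio := edge_ratio_leq d_gt0 d_lt1 sR_gt0 ss_le' st_le mm_le' (pos_INR e) e_le.
set q := Rpower (INR m) (- (d / 2)) in ratio.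
have real_step : INR 'C(s * s, t) * INR 'C(P - t, e - t) <= INR 'C(P, e) * q ^ t.
  apply: (Rmult_le_reg_r ((INR t * INR P) ^ t)); first by apply: pow_lt; apply: Rmult_lt_0_compat.
  have /le_INR := elimT leP nat_step; rewrite !INR_muln !INR_expn !INR_muln => {}nat_step.
  apply: Rle_trans nat_step _.
  rewrite (_ : INR 3 = 3); last by rewrite /=; lra.
  rewrite (Rmult_assoc (INR 'C(P, e))) -Rpow_mult_distr.
  apply: Rmult_le_compat_l; first exact: pos_INR.
  by apply: pow_incr; split => //; have := pos_INR e; nra.
have decay := Rpower_decay_pow_leq1 d_gt0 m_ge1 st_le.
apply: leq_INR; rewrite !INR_muln INR_expn INR_muln.
have mm_ge0 : 0 <= (INR m * INR m) ^ s by apply: pow_le; nra.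
apply: Rle_trans (Rmult_le_compat_r _ _ _ mm_ge0 real_step) _.
by have := pos_INR 'C(P, e); rewrite -/q in decay; nra.
Qed.

Local Close Scope R_scope.

Lemma set2_inj_l (T : finType) (u u' v : T) : [set u; v] = [set u'; v] -> u = u'.
Proof.
move=> eq_uv; have : u \in [set u'; v] by rewrite -eq_uv set21.
case/set2P => // u_v; have : u' \in [set u; v] by rewrite eq_uv set21.
by rewrite u_v setUid => /set1P.
Qed.

Lemma deg_in_leq n (E : sgraph n) (S : {set 'I_n}) v : v \in S ->
  deg_in E S v <= #|[set X in E | (X \subset S) && (v \in X)]|.
Proof.
move=> vS; rewrite /deg_in -(card_in_imset (f := fun u => [set u; v])); last first.
  by move=> u u' _ _; apply: set2_inj_l.
apply/subset_leq_card/subsetP => X /imsetP[u]; rewrite inE => /andP[uS uvE] ->.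
by rewrite inE uvE set22 andbT; apply/subsetP => w /set2P[] ->.
Qed.

Lemma sum_deg_in_leq n (E : sgraph n) (S : {set 'I_n}) : is_simple E ->
  \sum_(v in S) deg_in E S v <= 2 * #|[set X in E | X \subset S]|.
Proof.
move=> /forallP simpleE; set ES := [set X in E | X \subset S].
have incidences v : #|[set X in E | (X \subset S) && (v \in X)]| = \sum_(X in ES) (v \in X).
  by rewrite -big_mkcondr sum1_card; apply: eq_card => X; rewrite [RHS]unfold_in /= !inE andbA.
apply: (@leq_trans (\sum_(v in S) \sum_(X in ES) (v \in X))).
  by apply: leq_sum => v vS; rewrite -incidences deg_in_leq.
rewrite exchange_big /= mulnC -sum_nat_const.
apply: leq_sum => X; rewrite inE => /andP[XE _].
rewrite -big_mkcondr sum1_card -(eqP (implyP (simpleE X) XE)).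
by apply/subset_leq_card/subsetP => v; rewrite unfold_in => /andP[].
Qed.

Lemma card_ord_interval n a b : a + b <= n ->
  #|[set x : 'I_n | a <= x < a + b]| = b.
Proof.
move=> le_abn; have lt_n (i : 'I_b) : a + i < n by have := ltn_ord i; lia.
rewrite -[RHS](card_ord b) -(card_imset _ (f := fun i => Ordinal (lt_n i))); last first.
  by move=> i j /(congr1 val) /= /addnI /val_inj.
apply: eq_card => x; rewrite inE; apply/idP/imsetP => [/andP[le_ax lt_x] | [i _ ->]] /=.
  have lt_xa : x - a < b by lia.
  by exists (Ordinal lt_xa) => //; apply: val_inj => /=; lia.
by rewrite leq_addr ltn_add2l ltn_ord.
Qed.

Section Bipartite.
Variables n m : nat.
Hypothesis halves : m + m = n.

Definition left_part := [set x : 'I_n | x < m].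
Definition right_part := [set x : 'I_n | m <= x].
Definition cross_pairs : sgraph n :=
  [set [set p.1; p.2] | p in setX left_part right_part].

Lemma cross_pairsP X :
  reflect (exists x y : 'I_n, X = [set x; y] /\ x < m <= y) (X \in cross_pairs).
Proof.
apply: (iffP imsetP) => [[[x y]] | [x [y [-> /andP[lt_x le_y]]]]].
  by rewrite !inE /= => /andP[lt_x le_y] ->; exists x, y; rewrite lt_x le_y.
by exists (x, y); rewrite // !inE lt_x le_y.
Qed.

Lemma cross_pair_card2 X : X \in cross_pairs -> #|X| = 2.
Proof.
case/cross_pairsP => x [y [-> lt_xy]]; rewrite cards2.
by case: eqP => [/(congr1 val) /= | //]; lia.
Qed.

Lemma card_cross_pairs : #|cross_pairs| = m * m.
Proof.
rewrite card_in_imset ?cardsX; last first.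
  move=> [x y] [x' y']; rewrite !inE /= => /andP[lt_x le_y] /andP[lt_x' le_y'] eq_xy.
  have : x \in [set x'; y'] by rewrite -eq_xy set21.
  case/set2P => [eq_x | eq_x]; last by rewrite eq_x in lt_x; lia.
  rewrite -eq_x [[set x; _]]setUC [[set x; _]]setUC in eq_xy.
  by rewrite eq_x (set2_inj_l eq_xy).
have card_left : #|left_part| = m.
  rewrite -[RHS](@card_ord_interval n 0 m); last lia.
  by apply: eq_card => x; rewrite !inE.
have card_right : #|right_part| = m.
  rewrite -[RHS](@card_ord_interval n m m); last lia.
  by apply: eq_card => x; rewrite !inE halves ltn_ord andbT.
by rewrite card_left card_right.
Qed.

Definition bip_graphs e := [set E : sgraph n | (E \subset cross_pairs) && (#|E| == e)].
(* [|S|^2 <= m] encodes |S| <= (n/2)^(1/2). *)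
Definition small_sets := [set S : {set 'I_n} | (0 < #|S|) && (#|S| * #|S| <= m)].
Definition min_deg_geq d0 (E : sgraph n) (S : {set 'I_n}) := [forall v in S, d0 <= deg_in E S v].
Definition bad_graphs e d0 :=
  [set E in bip_graphs e | [exists S in small_sets, min_deg_geq d0 E S]].
Definition cross_pairs_in (S : {set 'I_n}) := [set X in cross_pairs | X \subset S].
Definition edge_draws t (S : {set 'I_n}) := [set T : sgraph n | (T \subset cross_pairs_in S) && (#|T| == t)].
Definition extensions e (T : sgraph n) := [set E in bip_graphs e | T \subset E].

Lemma card_bip_graphs e : #|bip_graphs e| = 'C(m * m, e).
Proof. by rewrite cards_draws card_cross_pairs. Qed.

Lemma sub_cross_pairs_simple (E : sgraph n) : E \subset cross_pairs -> is_simple E.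
Proof.
by move/subsetP=> sub_E; apply/forallP => X; apply/implyP => /sub_E/cross_pair_card2 ->.
Qed.

Lemma card_edge_draws t (S : {set 'I_n}) : #|edge_draws t S| <= 'C(#|S| * #|S|, t).
Proof.
rewrite cards_draws leq_bin2l //.
have := bin_fact_leq_expn #|S| 2; rewrite -cards_draws -mulnn => le_draws.
have sub_draws : cross_pairs_in S \subset [set X : {set 'I_n} | X \subset S & #|X| == 2].
  by apply/subsetP => X; rewrite !inE => /andP[/cross_pair_card2 -> ->].
by apply: leq_trans (subset_leq_card sub_draws) (leq_trans (leq_pmulr _ (fact_gt0 2)) le_draws).
Qed.

Lemma card_extensions e (T : sgraph n) : T \subset cross_pairs ->
  #|extensions e T| <= 'C(m * m - #|T|, e - #|T|).
Proof.
move=> T_cross.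
have card_rest : #|cross_pairs :\: T| = m * m - #|T|.
  by rewrite cardsD (setIidPr T_cross) card_cross_pairs.
rewrite -card_rest -cards_draws -(card_in_imset (f := fun E => E :\: T)); last first.
  move=> E1 E2; rewrite !inE => /andP[_ TE1] /andP[_ TE2] eq_diff.
  by rewrite -(setID E1 T) -(setID E2 T) eq_diff !(setIidPr _).
apply/subset_leq_card/subsetP => X /imsetP[E]; rewrite !inE => /andP[/andP[E_cross /eqP <-] TE] ->.
by rewrite setSD //= cardsD (setIidPr TE).
Qed.

Lemma dense_edge_draw e d0 E (S : {set 'I_n}) : E \in bip_graphs e -> min_deg_geq d0 E S ->
  exists2 T, T \in edge_draws (uphalf (#|S| * d0)) S & T \subset E.
Proof.
rewrite inE => /andP[E_cross _] /forall_inP min_deg.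
set ES := [set X in E | X \subset S].
have : #|S| * d0 <= 2 * #|ES|.
  apply: leq_trans (sum_deg_in_leq S (sub_cross_pairs_simple E_cross)).
  by rewrite -sum_nat_const leq_sum.
move=> many_edges.
have : 0 < #|[set T : sgraph n | T \subset ES & #|T| == uphalf (#|S| * d0)]|.
  by rewrite cards_draws bin_gt0; lia.
case/card_gt0P => T; rewrite inE => /andP[T_ES /eqP card_T].
exists T; last by apply: subset_trans T_ES _; apply/subsetP => X; rewrite inE => /andP[].
rewrite inE card_T eqxx andbT; apply: subset_trans T_ES _.
by apply/subsetP => X; rewrite !inE => /andP[/(subsetP E_cross) -> ->].
Qed.

Lemma bad_graphs_sub e d0 : bad_graphs e d0 \subset
  \bigcup_(S in small_sets) \bigcup_(T in edge_draws (uphalf (#|S| * d0)) S) extensions e T.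
Proof.
apply/subsetP => E; rewrite inE => /andP[E_bip /exists_inP[S S_small S_dense]].
have [T T_draw TE] := dense_edge_draw E_bip S_dense.
by apply/bigcupP; exists S => //; apply/bigcupP; exists T; rewrite // inE E_bip.
Qed.

Local Open Scope R_scope.

Lemma small_set_extensions_leq (d : R) e d0 S :
  0 < d -> d < 1 -> 8 / d <= INR d0 ->
  INR e <= Rpower (INR m) (3/2 - d/2) -> (e <= m * m)%N -> S \in small_sets ->
  ((\sum_(T in edge_draws (uphalf (#|S| * d0)) S) #|extensions e T|) * (m * m) ^ #|S|
     <= 'C(m * m, e))%N.
Proof.
move=> d_gt0 d_lt1 d0_ge e_le e_mm; rewrite inE => /andP[S_gt0 S_small].
set t := uphalf (#|S| * d0)%N.
have card_T T : T \in edge_draws t S -> #|T| = t by rewrite inE => /andP[_ /eqP].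
have [le_te | lt_et] := leqP t e; last first.
  rewrite big1 // => T /card_T T_size; apply/eqP; rewrite cards_eq0; apply/eqP/setP => E.
  by rewrite !inE; apply/negP => /andP[/andP[_ /eqP card_E] /subset_leq_card]; lia.
have st_le := uphalf_mul_geq #|S| d_gt0 d0_ge.
have ext_le T : T \in edge_draws t S -> (#|extensions e T| <= 'C(m * m - t, e - t))%N.
  move=> T_draw; rewrite -(card_T T T_draw); apply: card_extensions.
  move: T_draw; rewrite inE => /andP[/subset_trans T_cross _]; apply: T_cross.
  by apply/subsetP => X; rewrite inE => /andP[].
have te_mm : (t <= e <= m * m)%N by rewrite le_te e_mm.
apply: leq_trans (bin_dense_leq d_gt0 d_lt1 S_gt0 S_small st_le (leqnn _) e_le te_mm).
rewrite leq_mul2r; apply/orP; right.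
apply: leq_trans (leq_sum _ ext_le) _.
by rewrite sum_nat_const leq_mul2r card_edge_draws orbT.
Qed.

Lemma card_bad_graphs_leq (d : R) e d0 :
  0 < d -> d < 1 -> 8 / d <= INR d0 -> INR e <= Rpower (INR m) (3/2 - d/2) ->
  (e <= m * m)%N -> (16 <= m)%N -> (2 * #|bad_graphs e d0| <= 'C(m * m, e))%N.
Proof.
move=> d_gt0 d_lt1 d0_ge e_le e_mm m_ge16.
set C := 'C(m * m, e); set c := (m * m)%N.
(* union bound over S weighted by c^|S|; the weights of nonempty S sum to (1+c)^n - c^n *)
have bad_le : (#|bad_graphs e d0| * c ^ n <= \sum_(S : {set 'I_n} | S != set0) C * c ^ (n - #|S|))%N.
  apply: leq_trans (leq_mul (subset_leq_card (bad_graphs_sub e d0)) (leqnn _)) _.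
  apply: leq_trans (leq_mul (card_bigcup_leq _ _) (leqnn _)) _.
  rewrite big_distrl /= (big_mkcond (mem small_sets)) (big_mkcond (fun S : {set 'I_n} => S != set0)) /=.
  apply: leq_sum => S _; case S_small: (S \in small_sets) => //.
  have S_ne0 : S != set0 by move: S_small; rewrite inE -card_gt0 => /andP[].
  have S_le : (#|S| <= n)%N by have := max_card (mem S); rewrite card_ord.
  have -> : (c ^ n = c ^ #|S| * c ^ (n - #|S|))%N by rewrite -expnD subnKC.
  rewrite S_ne0 mulnA leq_mul2r; apply/orP; right.
  apply: leq_trans (leq_mul (card_bigcup_leq _ _) (leqnn _)) _.
  exact: small_set_extensions_leq d_gt0 d_lt1 d0_ge e_le e_mm S_small.
have total : (C * c ^ n + \sum_(S : {set 'I_n} | S != set0) C * c ^ (n - #|S|) = C * (1 + c) ^ n)%N.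
  by rewrite -sum_expn_subsets big_distrr [RHS](bigD1 set0) //= cards0 subn0.
have growth : (7 * (1 + c) ^ n <= 8 * c ^ n)%N by apply: expn_add1_leq; rewrite /c; nia.
have cn_gt0 : (0 < c ^ n)%N by rewrite expn_gt0 muln_gt0; apply/orP; left; lia.
rewrite -(leq_pmul2r cn_gt0).
move: bad_le total (leq_mul (leqnn C) growth).
by move: (c ^ n)%N ((1 + c) ^ n)%N (\sum_(S | _) _)%N => x y z; lia.
Qed.

Local Close Scope R_scope.
End Bipartite.

Local Open Scope R_scope.

(* [0 < m] is needed: [Rpower 0 _ = 1] since [ln 0 = 0]. *)
Lemma sqr_leq_of_Rpower_half s m : (0 < m)%N -> INR s <= Rpower (INR m) (1/2) -> (s * s <= m)%N.
Proof.
move=> m_gt0 s_le; apply: leq_INR; rewrite INR_muln.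
have mR_gt0 : 0 < INR m by apply: lt_0_INR; lia.
have sqr_root : Rpower (INR m) (1/2) * Rpower (INR m) (1/2) = INR m.
  by rewrite -Rpower_plus (_ : 1/2 + 1/2 = 1) ?Rpower_1 //; lra.
by have := pos_INR s; nra.
Qed.

Lemma not_bad_good_graph (eps c : R) n m e d0 (E : sgraph n) :
  (m + m = n)%N -> (0 < m)%N -> is_floor e (Rpower (INR n / 2) (2 - eps)) -> is_ceil d0 c ->
  E \in bip_graphs n m e :\: bad_graphs n m e d0 -> good_graph eps (1/2) c E.
Proof.
move=> halves m_gt0 e_floor d0_ceil; rewrite in_setD => /andP[not_bad E_bip].
move: (E_bip); rewrite inE => /andP[E_cross /eqP card_E].
have half_n : n./2 = m by rewrite -halves addnn doubleK.
have n_half : INR n / 2 = INR m by rewrite -halves INR_addn; lra.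
split; first exact: sub_cross_pairs_simple E_cross.
split; first by move=> X /(subsetP E_cross) /cross_pairsP; rewrite half_n.
split; first by rewrite card_E.
move=> S S_gt0; rewrite n_half => /(sqr_leq_of_Rpower_half m_gt0) S_small.
have : ~~ min_deg_geq d0 E S.
  apply: contra not_bad => S_dense; rewrite inE E_bip; apply/exists_inP; exists S => //.
  by rewrite inE S_gt0 S_small.
case/forall_inPn => v vS; rewrite -ltnNge => /leP/le_INR deg_lt; exists v => //.
by case: d0_ceil; rewrite S_INR in deg_lt; lra.
Qed.

Local Close Scope R_scope.

Section Universal.
Variables n k : nat.

Definition pullback N (U : sgraph N) (pi : {ffun 'I_n -> 'I_N}) : sgraph n :=
  [set X : {set 'I_n} | (#|X| == 2) && (pi @: X \in U)].
Definition pullbacks N (U : sgraph N) := [set pullback U pi | pi : {ffun 'I_n -> 'I_N}].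
Definition simple_graphs N := powerset [set X : {set 'I_N} | #|X| == 2].
Definition universal_tuples B :=
  \bigcup_(N < B.+1) \bigcup_(U in simple_graphs N)
    [set f : {ffun 'I_k -> sgraph n} | [forall i, f i \in pullbacks U]].

Lemma induced_sub_pullbacks N F (U : sgraph N) :
  is_simple F -> induced_sub F U -> F \in pullbacks U.
Proof.
move=> /forallP simpleF [pi [_ pi_induced]]; apply/imsetP; exists (finfun pi) => //.
apply/setP => X; rewrite inE; case: (boolP (#|X| == 2)) => [/cards2P[x [y [_ ->]]] | not2] /=.
  by rewrite imsetU !imset_set1 !ffunE pi_induced.
by apply: contraNF not2 => XF; exact: (implyP (simpleF X) XF).
Qed.

Lemma card_pullbacks N (U : sgraph N) : #|pullbacks U| <= N ^ n.
Proof. by apply: leq_trans (leq_imset_card _ _) _; rewrite card_ffun !card_ord. Qed.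

Lemma card_simple_graphs N : #|simple_graphs N| <= 2 ^ (N * N).
Proof.
rewrite card_powerset leq_pexp2l // card_draws card_ord.
by apply: leq_trans (leq_pmulr _ (fact_gt0 2)) _; rewrite mulnn bin_fact_leq_expn.
Qed.

Lemma card_universal_tuples B :
  #|universal_tuples B| <= B.+1 * 2 ^ (B * B) * (B ^ n) ^ k.
Proof.
apply: leq_trans (card_bigcup_leq _ _) _.
rewrite -mulnA -[X in X * _](card_ord B.+1) -sum_nat_const; apply: leq_sum => N _.
apply: leq_trans (card_bigcup_leq _ _) _.
have le_NB : N <= B by rewrite -ltnS.
apply: leq_trans (_ : \sum_(U in simple_graphs N) (B ^ n) ^ k <= _).
  apply: leq_sum => U _.
  have -> : #|[set f : {ffun 'I_k -> sgraph n} | [forall i, f i \in pullbacks U]]|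
            = #|(ffun_on (pullbacks U) : pred {ffun 'I_k -> sgraph n})|.
    by apply: eq_card => f; rewrite inE; apply/forallP/ffun_onP.
  rewrite card_ffun_on card_ord leq_expn2r //.
  by apply: leq_trans (card_pullbacks U) _; rewrite leq_expn2r.
rewrite sum_nat_const leq_mul2r (leq_trans (card_simple_graphs N)) ?orbT //.
by rewrite leq_pexp2l // leq_mul.
Qed.

Lemma exists_nonuniversal_family B (G : {set sgraph n}) :
  {in G, forall E, is_simple E} -> 0 < B -> B * B + B < k -> 2 * B ^ n <= #|G| ->
  exists M : {set sgraph n}, [/\ M \subset G, #|M| <= k &
    forall N (U : sgraph N), N <= B -> is_simple U -> ~ {in M, forall E, induced_sub E U}].
Proof.
move=> G_simple B_gt0 lt_Bk many_G.
set tuples := [set f : {ffun 'I_k -> sgraph n} | [forall i, f i \in G]].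
have : #|universal_tuples B| < #|tuples|.
  have -> : #|tuples| = #|G| ^ k.
    rewrite -[k in RHS]card_ord -card_ffun_on; apply: eq_card => f.
    by rewrite inE; apply/forallP/ffun_onP.
  apply: leq_ltn_trans (card_universal_tuples B) _.
  apply: leq_trans (leq_expn2r k many_G); rewrite expnMn ltn_pmul2r ?expn_gt0 ?B_gt0 //.
  apply: leq_ltn_trans (_ : _ <= 2 ^ B * 2 ^ (B * B)) _; first by rewrite leq_mul2r ltn_expl ?orbT.
  by rewrite -expnD ltn_exp2l // addnC.
rewrite ltnNge => too_many.
have /subsetPn[g g_tuple g_free] : ~~ (tuples \subset universal_tuples B).
  by apply: contra too_many => /subset_leq_card.
have g_G i : g i \in G by move: g_tuple; rewrite inE => /forallP.
exists [set g i | i : 'I_k]; split.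
- by apply/subsetP => _ /imsetP[i _ ->].
- by apply: leq_trans (leq_imset_card _ _) _; rewrite card_ord.
move=> N U le_NB /forallP U_simple g_induced; apply: (negP g_free).
have lt_NB : N < B.+1 by [].
apply/bigcupP; exists (Ordinal lt_NB) => //; apply/bigcupP; exists U.
  by rewrite powersetE; apply/subsetP => X XU; rewrite inE (implyP (U_simple X) XU).
rewrite inE; apply/forallP => i; apply: induced_sub_pullbacks; first exact: G_simple (g_G i).
by apply: g_induced; apply/imsetP; exists i.
Qed.
End Universal.

Local Open Scope R_scope.

Lemma Rpower_geq_of_root b r y : 0 < b -> 0 < r -> Rpower b (/ r) <= y -> b <= Rpower y r.
Proof.
move=> b_gt0 r_gt0 root_le; have root_gt0 : 0 < Rpower b (/ r) by apply: exp_pos.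
have -> : b = Rpower (Rpower b (/ r)) r by rewrite Rpower_mult Rinv_l ?Rpower_1 //; lra.
by apply: Rle_Rpower_l; lra.
Qed.

Lemma Rpower_half_gap (d x : R) : 0 < d -> d < 1 -> 32 + 2 * Rpower 4 (2 / d) <= x ->
  x * Rpower x (1/2 - d) + 3 <= Rpower (x / 2) (3/2 - d/2).
Proof.
move=> d_gt0 d_lt1 x_ge; have root_gt0 : 0 < Rpower 4 (2 / d) by apply: exp_pos.
set y := x / 2; set a := 3/2 - d.
have y_ge : 16 <= y by rewrite /y; lra.
have y_gt0 : 0 < y by lra.
have lhs : x * Rpower x (1/2 - d) = Rpower 2 a * Rpower y a.
  rewrite Rpower_mult_distr //; last lra.
  have -> : 2 * y = x by rewrite /y; field.
  by rewrite -{1}(Rpower_1 x) -?Rpower_plus /a; [congr Rpower | ]; lra.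
have rhs : Rpower y (3/2 - d/2) = Rpower y (d/2) * Rpower y a.
  by rewrite -Rpower_plus /a; congr Rpower; lra.
have two_a : Rpower 2 a <= 3.
  apply: Rle_trans (_ : Rpower 2 (1 + /2) <= 3); first by apply: Rle_Rpower; rewrite /a; lra.
  rewrite Rpower_plus Rpower_1 ?Rpower_sqrt; try lra.
  have : sqrt 2 <= 3/2 by rewrite -(sqrt_square (3/2)); [apply: sqrt_le_1_alt | ]; lra.
  lra.
have y_a : 4 <= Rpower y a.
  apply: Rle_trans (_ : Rpower y (/ 2) <= _); last by apply: Rle_Rpower; rewrite /a; lra.
  by apply: le_Rpower_half_of_sqr; lra.
have y_d : 4 <= Rpower y (d/2).
  by apply: Rpower_geq_of_root; rewrite ?Rinv_div /y; lra.
have := exp_pos (a * ln 2); rewrite -/(Rpower 2 a) => two_a_gt0.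
rewrite lhs rhs; nra.
Qed.

Lemma sqrt_gap (d x : R) : 0 < d -> 32 + Rpower 8 (/ d) <= x ->
  2 * Rpower x (1/2 - d) + 3 <= sqrt x.
Proof.
move=> d_gt0 x_ge; have root_gt0 : 0 < Rpower 8 (/ d) by apply: exp_pos.
have x_gt0 : 0 < x by lra.
have x_d : 8 <= Rpower x d by apply: Rpower_geq_of_root; lra.
have sqrt_x : 4 <= sqrt x.
  by rewrite -Rpower_sqrt //; apply: le_Rpower_half_of_sqr; lra.
have -> : Rpower x (1/2 - d) = sqrt x / Rpower x d.
  by rewrite /Rminus Rpower_plus Rpower_Ropp -Rpower_sqrt // (_ : 1/2 = /2) //; lra.
have : sqrt x / Rpower x d <= sqrt x / 8.
  by apply: Rmult_le_compat_l; [lra | apply: Rinv_le_contravar; lra].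
lra.
Qed.

Lemma eventually_bounds d : 0 < d -> d < 1 -> exists n0 : nat, forall n, (n0 <= n)%N ->
  [/\ 32 <= INR n,
      INR n * Rpower (INR n) (1/2 - d) + 3 <= Rpower (INR n / 2) (3/2 - d/2) &
      2 * Rpower (INR n) (1/2 - d) + 3 <= sqrt (INR n)].
Proof.
move=> d_gt0 d_lt1.
have roots_gt0 : 0 < Rpower 4 (2 / d) /\ 0 < Rpower 8 (/ d) by split; apply: exp_pos.
have [n0 [_ n0_ge]] := @is_ceil_exists (32 + 2 * Rpower 4 (2 / d) + Rpower 8 (/ d)) ltac:(lra).
exists n0 => n /leP/le_INR le_n0; split.
- lra.
- by apply: Rpower_half_gap => //; lra.
- by apply: sqrt_gap => //; lra.
Qed.

Lemma Rpower2_INR t : Rpower 2 (INR t) = INR (2 ^ t).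
Proof. by rewrite Rpower_pow ?INR_expn //; lra. Qed.

Lemma expn_leq_exp2 B n e (y : R) :
  INR B <= Rpower 2 y -> INR n * y + 2 <= INR e -> (4 * B ^ n <= 2 ^ e)%N.
Proof.
move=> B_le e_ge; apply: leq_INR; rewrite INR_muln INR_expn -Rpower2_INR.
have B_pow : INR B ^ n <= Rpower 2 (y * INR n).
  rewrite -Rpower_mult Rpower_pow; last exact: exp_pos.
  by apply: pow_incr; have := pos_INR B; lra.
have -> : INR 4 = Rpower 2 2 by rewrite Rpower_two /=; lra.
apply: Rle_trans (Rmult_le_compat_l _ _ _ (Rlt_le _ _ (exp_pos _)) B_pow) _.
by rewrite -Rpower_plus; apply: Rle_Rpower; lra.
Qed.

Lemma sqr_add_lt_exp2 B f (y : R) :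
  (0 < B)%N -> INR B <= Rpower 2 y -> 2 * y + 2 <= INR f -> (B * B + B < 2 ^ f)%N.
Proof.
move=> B_gt0 B_le f_ge; apply: leq_trans (_ : 4 * (B * B) <= _)%N; first by nia.
apply: leq_INR; rewrite !INR_muln -Rpower2_INR.
have -> : INR 4 * (INR B * INR B) = Rpower 2 2 * (INR B * INR B) by rewrite Rpower_two /=; lra.
apply: Rle_trans (_ : Rpower 2 2 * (Rpower 2 y * Rpower 2 y) <= _).
  by apply: Rmult_le_compat_l; [exact: Rlt_le (exp_pos _) | apply: Rmult_le_compat; have := pos_INR B; lra].
by rewrite -!Rpower_plus; apply: Rle_Rpower; lra.
Qed.

Lemma Nat_sqrt_bounds n : INR (Nat.sqrt n) <= sqrt (INR n) < INR (Nat.sqrt n) + 1.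
Proof.
have [sqr_le lt_sqr] := Nat.sqrt_spec n (Nat.le_0_l n).
have root_ge0 := pos_INR (Nat.sqrt n).
split.
  by rewrite -(sqrt_square (INR _)) //; apply: sqrt_le_1_alt; rewrite -mult_INR; apply: le_INR.
rewrite -(sqrt_square (INR _ + 1)); last lra.
apply: sqrt_lt_1_alt; split; first exact: pos_INR.
by rewrite -S_INR -mult_INR; apply: lt_INR.
Qed.

Lemma double_Rpower_leq_sqr (d x : R) : 0 < d -> 16 <= x -> 2 * Rpower x (3/2 - d/2) <= x * x.
Proof.
move=> d_gt0 x_ge; have x_gt0 : 0 < x by lra.
have -> : x * x = Rpower x (3/2 - d/2) * Rpower x (/2 + d/2).
  by rewrite -Rpower_plus -Rpower_two //; congr Rpower; lra.
have : 4 <= Rpower x (/2 + d/2).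
  apply: Rle_trans (_ : Rpower x (/ 2) <= _); last by apply: Rle_Rpower; lra.
  by apply: le_Rpower_half_of_sqr; lra.
by have := exp_pos ((3/2 - d/2) * ln x); rewrite -/(Rpower x _); nra.
Qed.

Lemma card_good_graphs (d : R) n m e d0 :
  (m + m = n)%N -> (16 <= m)%N -> 0 < d -> d < 1 -> 8 / d <= INR d0 ->
  INR e <= Rpower (INR m) (3/2 - d/2) ->
  (2 ^ e <= 2 * #|bip_graphs n m e :\: bad_graphs n m e d0|)%N.
Proof.
move=> halves m_ge16 d_gt0 d_lt1 d0_ge e_le.
have two_e : (2 * e <= m * m)%N.
  apply: leq_INR; rewrite !INR_muln (_ : INR 2 = 2) //.
  have m_ge : 16 <= INR m by rewrite (_ : 16 = INR 16); [apply/le_INR/leP | rewrite /=; lra].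
  by have := double_Rpower_leq_sqr d_gt0 m_ge; lra.
have bad_le := card_bad_graphs_leq halves d_gt0 d_lt1 d0_ge e_le ltac:(lia) m_ge16.
have bad_sub : bad_graphs n m e d0 \subset bip_graphs n m e.
  by apply/subsetP => E; rewrite inE => /andP[].
have := expn2_leq_bin two_e.
rewrite cardsD (setIidPr bad_sub) card_bip_graphs //; lia.
Qed.

Lemma exp2_Nat_sqrt_leq_ceil n k : is_ceil k (Rpower 2 (sqrt (INR n))) -> (2 ^ Nat.sqrt n <= k)%N.
Proof.
move=> [_ k_ge]; apply: leq_INR; rewrite -Rpower2_INR; apply: Rle_trans k_ge.
by apply: Rle_Rpower; [lra | case: (Nat_sqrt_bounds n)].
Qed.

Lemma good_nonuniversal_family (delta : R) n e d0 B :
  0 < delta -> delta < 1 -> ~~ odd n ->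
  [/\ 32 <= INR n,
      INR n * Rpower (INR n) (1/2 - delta) + 3 <= Rpower (INR n / 2) (3/2 - delta/2) &
      2 * Rpower (INR n) (1/2 - delta) + 3 <= sqrt (INR n)] ->
  is_floor e (Rpower (INR n / 2) (2 - (1/2 + delta/2))) -> is_ceil d0 (8 / delta) ->
  is_floor B (Rpower 2 (Rpower (INR n) (1/2 - delta))) ->
  exists M : {set sgraph n},
    [/\ {in M, forall E, good_graph (1/2 + delta/2) (1/2) (8 / delta) E},
        (#|M| <= 2 ^ Nat.sqrt n)%N &
        forall N (U : sgraph N), (N <= B)%N -> is_simple U -> ~ {in M, forall E, induced_sub E U}].
Proof.
move=> d_gt0 d_lt1 n_even [n_ge32 e_gap k_gap] e_floor d0_ceil B_floor.
set m := n./2; have halves : (m + m = n)%N by rewrite addnn -[RHS]even_halfK.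
have n_half : INR n / 2 = INR m by rewrite -halves INR_addn; lra.
have m_ge16 : (16 <= m)%N by apply: leq_INR; rewrite -n_half /=; lra.
set y := Rpower (INR n) (1/2 - delta) in e_gap k_gap B_floor.
have [e_le e_ge] : INR e <= Rpower (INR m) (3/2 - delta/2) /\ INR n * y + 2 <= INR e.
  by case: e_floor; rewrite -n_half (_ : 2 - _ = 3/2 - delta/2); lra.
have B_le : INR B <= Rpower 2 y by case: B_floor.
have B_gt0 : (0 < B)%N.
  apply: (leq_is_floor B_floor); rewrite /= -(Rpower_O 2); last lra.
  by apply: Rle_Rpower; [lra | exact: Rlt_le (exp_pos _)].
set G := bip_graphs n m e :\: bad_graphs n m e d0.
have many : (2 * B ^ n <= #|G|)%N.
  have := card_good_graphs halves m_ge16 d_gt0 d_lt1 (proj2 d0_ceil) e_le.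
  by rewrite -/G; have := expn_leq_exp2 B_le e_ge; lia.
have B_small : (B * B + B < 2 ^ Nat.sqrt n)%N.
  by apply: sqr_add_lt_exp2 B_gt0 B_le _; case: (Nat_sqrt_bounds n); lra.
have G_good E : E \in G -> good_graph (1/2 + delta/2) (1/2) (8 / delta) E.
  exact: not_bad_good_graph halves ltac:(lia) e_floor d0_ceil.
have G_simple : {in G, forall E, is_simple E} by move=> E /G_good [].
have [M [M_G M_card M_free]] := exists_nonuniversal_family G_simple B_gt0 B_small many.
by exists M; split => // E /(subsetP M_G) /G_good.
Qed.

Theorem mainTheorem5 (delta : R) :
  0 < delta -> delta < 1 ->
  let eps := 1/2 + delta/2 in
  let eps' := 1/2 in
  let c := 8/delta in
  exists n0 : nat, forall n : nat, (n0 <= n)%N -> ~~ odd n ->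
    exists M : {set sgraph n},
      (forall E, E \in M -> good_graph eps eps' c E) /\
      (forall k : nat, is_ceil k (Rpower 2 (sqrt (INR n))) -> (#|M| <= k)%N) /\
      ~ (exists (N : nat) (U : sgraph N),
           is_simple U /\
           INR N <= Rpower 2 (Rpower (INR n) (1/2 - delta)) /\
           forall E, E \in M -> induced_sub E U).
Proof.
move=> d_gt0 d_lt1 eps eps' c.
have [n0 large] := eventually_bounds d_gt0 d_lt1.
exists n0 => n /large bounds n_even.
have [e e_floor] := @is_floor_exists (Rpower (INR n / 2) (2 - eps)) (Rlt_le _ _ (exp_pos _)).
have c_ge0 : 0 <= c by apply: Rlt_le; apply: Rdiv_lt_0_compat; lra.
have [d0 d0_ceil] := is_ceil_exists c_ge0.
have [B B_floor] := @is_floor_exists (Rpower 2 (Rpower (INR n) (1/2 - delta))) (Rlt_le _ _ (exp_pos _)).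
have [M [M_good M_card M_free]] :=
  good_nonuniversal_family d_gt0 d_lt1 n_even bounds e_floor d0_ceil B_floor.
exists M; split; [exact: M_good | split].
- by move=> k /exp2_Nat_sqrt_leq_ceil; apply: leq_trans.
- case=> N [U [U_simple [N_le induced]]].
  exact: M_free (leq_is_floor B_floor N_le) U_simple induced.
Qed.
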